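(* Let $\mathcal{G}$ be a causal diagram with action $X\in\mathbf{O}$ and latent reward $Y\in\mathbf{L}$ that is a descendant of $X$, and let $\Pi$ be a policy space over $X$. If $\mathrm{pa}(X)_{\mathcal{G}} \subseteq \mathrm{Pa}(\Pi)$ and there is no bidirected arrow incident to $X$ in $\mathcal{G}$, then $P(y)$ is imitable with respect to $\langle\mathcal{G},\Pi\rangle$. Moreover, an imitating policy $\pi\in\Pi$ is given by $\pi(x\mid \mathrm{pa}(\Pi)) = P(x \mid \mathrm{pa}(X)_{\mathcal{G}})$.
   Context: A structural causal model (SCM) $M = \langle \mathbf{U}, \mathbf{V}, \mathcal{F}, P(\mathbf{u})\rangle$ has exogenous variables $\mathbf{U}$ drawn from $P(\mathbf{u})$, endogenous variables $\mathbf{V}$, and for each $V\in\mathbf{V}$ a function $V \leftarrow f_V(\mathrm{Pa}_V, U_V)$ with $\mathrm{Pa}_V \subseteq \mathbf{V}$, $U_V \subseteq \mathbf{U}$. A partially observable SCM (POSCM) is $\langle M, \mathbf{O}, \mathbf{L}\rangle$ with $\mathbf{O},\mathbf{L}$ a partition of $\mathbf{V}$ into observed and latent endogenous variables; $P(\mathbf{o})$ is the observational distribution. The causal diagram $\mathcal{G}$ of $M$ is the acyclic graph on $\mathbf{V}$ with an arrow $V_j \to V_i$ whenever $V_j \in \mathrm{Pa}_{V_i}$ and a bidirected arrow $V_i \leftrightarrow V_j$ whenever $U_{V_i}\cap U_{V_j}\neq\emptyset$; $\mathcal{M}_{\langle\mathcal{G}\rangle}$ is the class of POSCMs with causal diagram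 $\mathcal{G}$; $\mathrm{pa}(X)_{\mathcal{G}}$ is the set of parents of $X$ via directed arrows. $\mathcal{G}_{\overline{X}}$ is $\mathcal{G}$ with arrows into $X$ removed. A policy space $\Pi$ is determined by a covariate set $\mathrm{Pa}(\Pi) \subseteq \mathbf{O}\setminus \mathrm{De}(X)_{\mathcal{G}_{\overline{X}}}$ and consists of all maps $\pi(x\mid \mathrm{pa}(\Pi))$ from values of $\mathrm{Pa}(\Pi)$ to distributions over $X$. The intervention $\mathrm{do}(\pi)$ replaces $f_X$ by drawing $X$ from $\pi$, giving $P(\mathbf{v}\mid \mathrm{do}(\pi)) = \sum_{\mathbf{u}} P(\mathbf{u}) \prod_{V\neq X} P(v\mid \mathrm{pa}_V, u_V)\,\pi(x\mid \mathrm{pa}(\Pi))$. For $\mathbf{Y}\subseteq \mathbf{V}$, $P(\mathbf{y})$ is imitable w.r.t. $\langle\mathcal{G},\Pi\rangle$ if there is a policy $\pi\in\Pi$ uniquely computable from $P(\mathbf{o})$ such that $P(\mathbf{y}\mid \mathrm{do}(\pi);M) = P(\mathbf{y};M)$ for every $M\in\mathcal{M}_{\langle\mathcal{G}\rangle}$; such $\pi$ is an imitating policy. *)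

From HB Require Import structures.
From mathcomp Require Import all_boot all_order all_algebra.
From mathcomp Require Import reals.
Set Implicit Arguments. Unset Strict Implicit. Unset Printing Implicit Defensive.
Import Order.TTheory GRing.Theory Num.Theory.
Local Open Scope ring_scope.

(* Endogenous variables are indexed by 'I_n; variable i ranges over the
   finite domain D i.  A (full) assignment of values to V: *)
Definition asg (n : nat) (D : 'I_n -> finType) := {dffun forall i : 'I_n, D i}.

(* A causal diagram on V = 'I_n : [dir j i] means the arrow V_j -> V_i,
   [bidir i j] means the bidirected arrow V_i <-> V_j. *)
Definition acyclic (n : nat) (dir : rel 'I_n) : Prop :=
  forall i j, dir i j -> ~~ connect dir j i.

Definition paG (n : nat) (dir : rel 'I_n) (X : 'I_n) : {set 'I_n} :=
  [set j | dir j X].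

Definition De (n : nat) (dir : rel 'I_n) (X : 'I_n) : {set 'I_n} :=
  [set j | connect dir X j].

Definition cut_into (n : nat) (dir : rel 'I_n) (X : 'I_n) : rel 'I_n :=
  fun a b => dir a b && (b != X).

(* Exogenous variables are indexed by a finite type UI, U_k ranging over UD k,
   mutually independent with marginals PU k; P(u) = prod_k PU k (u k). *)
Unset Implicit Arguments.
Record SCM (R : realType) (n : nat) (D : 'I_n -> finType) := {
  UI : finType;
  UD : UI -> finType;
  PU : forall k : UI, UD k -> R;
  PU_ge0 : forall k x, 0 <= PU k x;
  PU_sum1 : forall k, \sum_(x : UD k) PU k x = 1;
  paV : 'I_n -> {set 'I_n};
  uV : 'I_n -> {set UI};
  fV : forall i : 'I_n, asg D -> {dffun forall k : UI, UD k} -> D i;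
  fV_local : forall i (v v' : asg D) (u u' : {dffun forall k : UI, UD k}),
      (forall j, j \in paV i -> v j = v' j) ->
      (forall k, k \in uV i -> u k = u' k) ->
      fV i v u = fV i v' u'
}.
Set Implicit Arguments.
Arguments SCM R {n} D.
Arguments UI {R n D} _.
Arguments UD {R n D} _ _.
Arguments PU {R n D} _ _ _.
Arguments paV {R n D} _ _.
Arguments uV {R n D} _ _.
Arguments fV {R n D} _ _ _ _.

Section SCMdefs.
Variables (R : realType) (n : nat) (D : 'I_n -> finType).

Definition uasg (M : SCM R D) := {dffun forall k : UI M, UD M k}.

Definition Pu (M : SCM R D) (u : uasg M) : R := \prod_k PU M k (u k).

Definition Pv (M : SCM R D) (v : asg D) : R :=
  \sum_(u : uasg M) Pu u * \prod_(i : 'I_n) (v i == fV M i v u)%:R.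

Definition has_diagram (M : SCM R D) (dir bidir : rel 'I_n) : Prop :=
  (forall i j, dir j i <-> j \in paV M i) /\
  (forall i j, bidir i j <-> (i != j) /\ (uV M i :&: uV M j != set0)).

(* a policy for action X : a map from assignments to (unnormalised) weights
   on the values of X; membership in the policy space with covariates PaPi *)
Definition policy (X : 'I_n) := asg D -> D X -> R.

Definition in_policy_space (PaPi : {set 'I_n}) (X : 'I_n) (pol : policy X) : Prop :=
  [/\ forall v v' : asg D, (forall i, i \in PaPi -> v i = v' i) -> pol v = pol v',
      forall v x, 0 <= pol v x &
      forall v, \sum_(x : D X) pol v x = 1].

Definition Pdo (M : SCM R D) (X : 'I_n) (pol : policy X) (v : asg D) : R :=
  \sum_(u : uasg M) Pu u * (\prod_(i : 'I_n | i != X) (v i == fV M i v u)%:R)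
                        * pol v (v X).

Definition PY (M : SCM R D) (Y : 'I_n) (y : D Y) : R :=
  \sum_(v : asg D) (v Y == y)%:R * Pv M v.
Definition PYdo (M : SCM R D) (X : 'I_n) (pol : policy X) (Y : 'I_n) (y : D Y) : R :=
  \sum_(v : asg D) (v Y == y)%:R * Pdo M pol v.

(* marginal of P over the variables S, evaluated at the values of v on S *)
Definition marg (M : SCM R D) (S : {set 'I_n}) (v : asg D) : R :=
  \sum_(w : asg D) [forall i in S, w i == v i]%:R * Pv M w.
Definition margx (M : SCM R D) (S : {set 'I_n}) (X : 'I_n) (x : D X) (v : asg D) : R :=
  \sum_(w : asg D) ([forall i in S, w i == v i] && (w X == x))%:R * Pv M w.

Definition Pobs (M : SCM R D) (O : {set 'I_n}) : asg D -> R := marg M O.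

(* P(y) imitable w.r.t. <G, Pi>: a policy in Pi, computed from P(o) alone
   (through a map Phi applied to P(o)), reproducing P(y) in every model of
   the class M_<G>. *)
Definition imitable (dir bidir : rel 'I_n) (O : {set 'I_n}) (X : 'I_n)
    (PaPi : {set 'I_n}) (Y : 'I_n) : Prop :=
  exists Phi : (asg D -> R) -> policy X,
    forall M : SCM R D, has_diagram M dir bidir ->
      in_policy_space PaPi (Phi (Pobs M O)) /\
      forall y : D Y, PYdo M (Phi (Pobs M O)) y = PY M y.

End SCMdefs.

From HB Require Import structures.
From mathcomp Require Import all_boot all_order all_algebra.
From mathcomp Require Import reals.
From mathcomp Require Import ring.
Set Implicit Arguments. Unset Strict Implicit. Unset Printing Implicit Defensive.
Import Order.TTheory GRing.Theory Num.Theory.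
Local Open Scope ring_scope.

(* Because X shares no exogenous variable with any other endogenous variable,
   its mechanism is independent of the remaining equations:
   P(v) = q(v_X | v) R(v), where q(x | v) is the probability that f_X sends v
   to x (it depends on v only through pa(X)) and R(v) is the probability that
   v solves every equation but that of X; likewise
   P(v | do(pi)) = R(v) pi(v_X | v).  For fixed exogenous u, the equations
   with X clamped to x have a unique solution, whose values on the
   non-descendants of X, in particular on pa(X), do not depend on x.  Hence the
   R-mass of the assignments that agree with v on pa(X) and take the value x
   at X does not depend on x, which gives P(x | pa(X)) = q(x | v) wherever
   P(pa(X)) > 0, and so P(v | do(pi)) = P(v) for every v, whatever the reward
   Y.  As pa(X) and X are observed, P(x | pa(X)) is computed from P(o). *)

Notation agree_on S w v := [forall i in S, w i == v i].

Lemma sum_prod_dffun (R : comNzRingType) (I : finType) (T_ : I -> finType)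
    (F : forall i, T_ i -> R) :
  \sum_(f : {dffun forall i, T_ i}) \prod_i F i (f i) = \prod_i \sum_(x : T_ i) F i x.
Proof.
pose P_ i : {ffun T_ i -> R} := [ffun x => F i x].
rewrite (reindex (@dffun_of_fprod I T_)); last exact/onW_bij/dffun_of_fprod_bij.
transitivity (\sum_(t : fprod T_) \prod_(i in I) P_ i (t i)).
  by apply: eq_bigr => t _; apply: eq_bigr => i _; rewrite !ffunE.
rewrite big_fprod.
apply: etrans (esym (bigA_distr_big_dep (fun i => tagged_with T_ i)
                                        (fun i j => untag 0 (P_ i) j))) _.
apply: eq_bigr => i _; transitivity (\sum_(x : T_ i) P_ i x).
  exact: esym (big_tag (fun i (x : T_ i) => P_ i x) i).
by apply: eq_bigr => x _; rewrite ffunE.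
Qed.

Lemma sum_eq_natr (R : pzSemiRingType) (T : finType) (a : T) (F : T -> R) :
  \sum_x (a == x)%:R * F x = F a.
Proof.
under eq_bigr do rewrite mulr_natl mulrb.
by rewrite -big_mkcond /=; under eq_bigl do rewrite eq_sym; rewrite big_pred1_eq.
Qed.

Lemma prod_natr_forall (R : comPzSemiRingType) (T : finType) (P b : pred T) :
  \prod_(i | P i) (b i)%:R = [forall (i | P i), b i]%:R :> R.
Proof.
case: forall_inP => [Pb | /forall_inP]; first by rewrite big1 // => i /Pb ->.
rewrite negb_forall => /existsP[i]; rewrite negb_imply => /andP[Pi /negbTE bi].
by rewrite (bigD1 i) //= bi mul0r.
Qed.

Section Exogenous.
Variables (R : realType) (n : nat) (D : 'I_n -> finType) (M : SCM R D).

Definition expU (F : uasg M -> R) : R := \sum_u Pu u * F u.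

Lemma Pu_ge0 (u : uasg M) : 0 <= Pu u.
Proof. by apply: prodr_ge0 => k _; apply: PU_ge0. Qed.

Lemma sum_Pu : \sum_(u : uasg M) Pu u = 1.
Proof. by rewrite sum_prod_dffun big1 // => k _; apply: PU_sum1. Qed.

Lemma expU_ge0 F : (forall u, 0 <= F u) -> 0 <= expU F.
Proof. by move=> F0; apply: sumr_ge0 => u _; rewrite mulr_ge0 ?Pu_ge0. Qed.

(* Swapping the S-coordinates of two independent draws (a, b) preserves
   P(a) P(b), which decouples A from B. *)
Lemma expU_mul_indep (S : {set UI M}) (A B : uasg M -> R) :
  (forall u u' : uasg M, (forall k, k \in S -> u k = u' k) -> A u = A u') ->
  (forall u u' : uasg M, (forall k, k \notin S -> u k = u' k) -> B u = B u') ->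
  expU (fun u => A u * B u) = expU A * expU B.
Proof.
move=> A_S B_S.
pose mix (a b : uasg M) : uasg M := [ffun k => if k \in S then a k else b k].
pose swap (p : uasg M * uasg M) := (mix p.1 p.2, mix p.2 p.1).
have swapK : involutive swap.
  by move=> [a b]; congr pair; apply/ffunP => k; rewrite !ffunE; case: (k \in S).
have Pu_swap a b : Pu (mix a b) * Pu (mix b a) = Pu a * Pu b.
  rewrite /Pu -!big_split; apply: eq_bigr => k _; rewrite !ffunE.
  by case: (k \in S); last exact: mulrC.
rewrite /expU -[LHS]mulr1 -sum_Pu !mulr_suml.
under eq_bigr do rewrite mulr_sumr; under [RHS]eq_bigr do rewrite mulr_sumr.
rewrite !pair_bigA (reindex_inj (inv_inj swapK)) /=.
apply: eq_bigr => -[a b] _ /=.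
rewrite (A_S (mix a b) a) => [|k kS]; last by rewrite ffunE kS.
rewrite (B_S (mix a b) b) => [|k /negbTE kS]; last by rewrite ffunE kS.
transitivity (Pu (mix a b) * Pu (mix b a) * (A a * B b)); first by ring.
by rewrite Pu_swap; ring.
Qed.

End Exogenous.

Section Solutions.
Variables (R : realType) (n : nat) (D : 'I_n -> finType) (M : SCM R D).
Variables (dir : rel 'I_n) (X : 'I_n).
Hypothesis acyc : acyclic dir.
Hypothesis dir_paV : forall i j, dir j i <-> j \in paV M i.

Definition solves_off (u : uasg M) (w : asg D) : bool :=
  [forall (i | i != X), w i == fV M i w u].

Definition ancestors_card (i : 'I_n) : nat := #|[set j | connect dir j i]|.

Lemma ancestors_card_gt0 i : (0 < ancestors_card i)%N.
Proof. by apply/card_gt0P; exists i; rewrite inE connect0. Qed.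

Lemma ancestors_card_lt j i : dir j i -> (ancestors_card j < ancestors_card i)%N.
Proof.
move=> dji; apply/proper_card/properP; split.
  by apply/subsetP => k; rewrite !inE => /connect_trans; apply; apply: connect1.
by exists i; rewrite !inE ?connect0 //; apply: acyc.
Qed.

Lemma solves_off_agree u (w w' : asg D) : solves_off u w -> solves_off u w' ->
  forall i, w X = w' X \/ ~~ connect dir X i -> w i = w' i.
Proof.
move=> /forall_inP sol /forall_inP sol' i.
have [k] := ubnP (ancestors_card i); elim: k i => // k IH i lt_ik hX.
have [iX|iX] := eqVneq i X; first by case: hX; rewrite iX ?connect0.
rewrite (eqP (sol i iX)) (eqP (sol' i iX)); apply: fV_local => // j /dir_paV dji.
apply: IH; first exact: leq_trans (ancestors_card_lt dji) lt_ik.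
case: hX => [|nXi]; [by left | right].
by apply: contra nXi => /connect_trans; apply; apply: connect1.
Qed.

(* Iterating the equations, with X clamped to x, stabilises at coordinate i
   after [ancestors_card i] rounds. *)
Lemma solves_off_exists u (x : D X) (w0 : asg D) :
  exists2 w : asg D, w X = x & solves_off u w.
Proof.
pose step (w : asg D) : asg D := [ffun i => dfwith (fun j => fV M j w u) x i].
have stepX w : step w X = x by rewrite ffunE dfwith_in.
have stepN w i : i != X -> step w i = fV M i w u.
  by move=> iX; rewrite ffunE dfwith_out // eq_sym.
have stable k i : (ancestors_card i <= k)%N ->
    iter k.+1 step w0 i = iter k.+2 step w0 i.
  elim: k i => [|k IH] i le_ik.
    by move: (ancestors_card_gt0 i); rewrite ltnNge le_ik.
  have [->|iX] := eqVneq i X; first by rewrite !iterS !stepX.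
  rewrite (iterS k.+1) (iterS k.+2) !stepN //; apply: fV_local => // j /dir_paV dji.
  by apply: IH; rewrite -ltnS; apply: leq_trans (ancestors_card_lt dji) le_ik.
exists (iter n.+1 step w0); first exact: stepX.
apply/forall_inP => i iX; rewrite stable; first by rewrite iterS stepN.
by apply: leq_trans (max_card _) _; rewrite card_ord.
Qed.

End Solutions.

Section Marginals.
Variables (R : realType) (n : nat) (D : 'I_n -> finType) (M : SCM R D).

Lemma Pv_ge0 (w : asg D) : 0 <= Pv M w.
Proof. by apply: expU_ge0 => u; apply: prodr_ge0 => i _; apply: ler0n. Qed.

Lemma marg_ge0 (S : {set 'I_n}) (v : asg D) : 0 <= marg M S v.
Proof. by apply: sumr_ge0 => w _; rewrite mulr_ge0 ?Pv_ge0 ?ler0n. Qed.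

Lemma marg_sum_margx (S : {set 'I_n}) (X : 'I_n) (v : asg D) :
  marg M S v = \sum_(x : D X) margx M S x v.
Proof.
rewrite /marg /margx exchange_big; apply: eq_bigr => w _.
under eq_bigr do rewrite andbC -mulnb natrM -mulrA.
exact: esym (sum_eq_natr (w X) (fun=> _)).
Qed.

End Marginals.

Section Factorisation.
Variables (R : realType) (n : nat) (D : 'I_n -> finType) (M : SCM R D).
Variables (dir : rel 'I_n) (X : 'I_n).
Hypothesis acyc : acyclic dir.
Hypothesis dir_paV : forall i j, dir j i <-> j \in paV M i.
Hypothesis uV_disjoint : forall j, j != X -> [disjoint uV M j & uV M X].

Local Notation pa := (paG dir X).

Definition mechX (w : asg D) (x : D X) : R := expU (fun u => (x == fV M X w u)%:R).

Definition Psolves (w : asg D) : R := expU (fun u : uasg M => (solves_off X u w)%:R).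

Lemma Psolves_ge0 w : 0 <= Psolves w.
Proof. by apply: expU_ge0 => u; apply: ler0n. Qed.

Lemma Pv_factor w : Pv M w = mechX w (w X) * Psolves w.
Proof.
rewrite /mechX /Psolves -(expU_mul_indep (S := uV M X)).
- by apply: eq_bigr => u _; rewrite (bigD1 X) //= prod_natr_forall.
- by move=> u u' uu'; congr (_ == _)%:R; apply: fV_local.
move=> u u' uu'; congr (nat_of_bool _)%:R; apply: eq_forallb_in => i iX.
congr (_ == _); apply: fV_local => // k ki.
by apply: uu'; rewrite (disjointFr (uV_disjoint iX) ki).
Qed.

Lemma Pdo_factor (pol : policy R D X) w : Pdo M pol w = Psolves w * pol w (w X).
Proof.
by rewrite /Pdo /Psolves /expU mulr_suml; under eq_bigr do rewrite prod_natr_forall.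
Qed.

Lemma mechX_pa (w w' : asg D) : agree_on pa w w' -> mechX w =1 mechX w'.
Proof.
move=> /forall_inP ww' x; apply: eq_bigr => u _; congr (_ * (_ == _)%:R).
by apply: fV_local => // j /dir_paV djX; apply/eqP/ww'; rewrite inE.
Qed.

Lemma sum_mechX w : \sum_x mechX w x = 1.
Proof.
rewrite /mechX /expU exchange_big -[RHS](sum_Pu M); apply: eq_bigr => u _.
rewrite -mulr_sumr -[RHS]mulr1; congr (_ * _).
under eq_bigr do rewrite eq_sym -[_%:R]mulr1.
exact: sum_eq_natr.
Qed.

Variable v : asg D.

Definition Psolves_slice (x : D X) : R :=
  \sum_(w : asg D) (agree_on pa w v && (w X == x))%:R * Psolves w.

Lemma sum_solves_off_unique (P : pred (asg D)) (u : uasg M) (w1 : asg D) :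
    solves_off X u w1 ->
  \sum_w (P w && (w X == w1 X))%:R * (solves_off X u w)%:R = (P w1)%:R :> R.
Proof.
move=> sol1; rewrite -[RHS](sum_eq_natr w1 (fun w => (P w)%:R)).
apply: eq_bigr => w _; have [<-|w1w] := eqVneq w1 w.
  by rewrite eqxx sol1 andbT mulr1 mul1r.
rewrite mul0r -natrM mulnb -andbA; case: (boolP (solves_off X u w)) => [sol|];
  last by rewrite !andbF.
case: eqP => [eX|]; last by rewrite andbF.
case/negP: w1w; apply/eqP/ffunP => i.
by apply: (solves_off_agree acyc dir_paV sol1 sol); left.
Qed.

Lemma Psolves_slice_const x x' : Psolves_slice x = Psolves_slice x'.
Proof.
have sliceE y : Psolves_slice y = expU (fun u : uasg M =>
    \sum_(w : asg D) (agree_on pa w v && (w X == y))%:R * (solves_off X u w)%:R).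
  rewrite /Psolves_slice /Psolves /expU; under eq_bigr do rewrite mulr_sumr.
  by rewrite exchange_big; apply: eq_bigr => u _; rewrite mulr_sumr;
     apply: eq_bigr => w _; rewrite mulrCA.
rewrite !sliceE; apply: eq_bigr => u _; congr (_ * _).
have [w1 <- sol1] := solves_off_exists acyc dir_paV u x v.
have [w2 <- sol2] := solves_off_exists acyc dir_paV u x' v.
rewrite !sum_solves_off_unique //; congr (nat_of_bool _)%:R.
apply: eq_forallb_in => j; rewrite inE => djX; congr (_ == _).
by apply: (solves_off_agree acyc dir_paV sol1 sol2); right; apply: acyc.
Qed.

Lemma margx_factor x : margx M pa x v = mechX v x * Psolves_slice x.
Proof.
rewrite /margx /Psolves_slice mulr_sumr; apply: eq_bigr => w _; rewrite Pv_factor.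
case: (boolP (_ && _)) => [/andP[agr /eqP <-]|_]; last by rewrite !mul0r mulr0.
by rewrite (mechX_pa agr) !mul1r.
Qed.

Lemma marg_factor : marg M pa v = Psolves_slice (v X).
Proof.
rewrite (marg_sum_margx _ _ X).
under eq_bigr do rewrite margx_factor (Psolves_slice_const _ (v X)).
by rewrite -mulr_suml sum_mechX mul1r.
Qed.

Lemma Psolves_le_slice : Psolves v <= Psolves_slice (v X).
Proof.
rewrite /Psolves_slice (bigD1 v) //= eqxx andbT.
have -> : agree_on pa v v by apply/forall_inP.
by rewrite mul1r lerDl; apply: sumr_ge0 => w _; rewrite mulr_ge0 ?Psolves_ge0.
Qed.

Lemma Pdo_eq_Pv (pol : policy R D X) :
    (marg M pa v != 0 -> pol v (v X) = margx M pa (v X) v / marg M pa v) ->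
  Pdo M pol v = Pv M v.
Proof.
move=> pol_cond; rewrite Pdo_factor Pv_factor mulrC.
have [->|Psolves_neq0] := eqVneq (Psolves v) 0; first by rewrite !mulr0.
have slice_gt0 : 0 < Psolves_slice (v X).
  by apply: lt_le_trans Psolves_le_slice; rewrite lt0r Psolves_neq0 Psolves_ge0.
by rewrite pol_cond marg_factor ?gt_eqF // margx_factor mulfK ?gt_eqF.
Qed.

End Factorisation.

Section Identification.
Variables (R : realType) (n : nat) (D : 'I_n -> finType) (O : {set 'I_n}).

Lemma agree_on_sym (S : {set 'I_n}) (w w' : asg D) :
  agree_on S w w' = agree_on S w' w.
Proof. by apply: eq_forallb_in => i _; rewrite eq_sym. Qed.

Lemma agree_on_trans (S : {set 'I_n}) (w1 w2 w3 : asg D) :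
  agree_on S w1 w2 -> agree_on S w2 w3 -> agree_on S w1 w3.
Proof.
move=> /forall_inP h12 /forall_inP h23; apply/forall_inP => i iS.
by rewrite (eqP (h12 i iS)) h23.
Qed.

Definition class_card (w : asg D) : R := \sum_(w' : asg D) (agree_on O w' w)%:R.

Lemma class_card_agree (w w' : asg D) :
  agree_on O w w' -> class_card w = class_card w'.
Proof.
move=> ww'; apply: eq_bigr => z _; congr (nat_of_bool _)%:R.
apply/idP/idP => [zw|zw']; first exact: agree_on_trans zw ww'.
by apply: agree_on_trans zw' _; rewrite agree_on_sym.
Qed.

Lemma class_card_neq0 (w : asg D) : class_card w != 0.
Proof.
rewrite /class_card (bigD1 w) //= gt_eqF // ltr_pwDl ?sumr_ge0 //.
by have -> : agree_on O w w by apply/forall_inP.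
Qed.

(* The mass of an O-invariant event K, read off the observed marginal g:
   each O-class contributes its marginal once. *)
Definition mass_from_obs (g : asg D -> R) (K : {set asg D}) : R :=
  \sum_(w : asg D) (w \in K)%:R * (g w / class_card w).

Lemma mass_from_Pobs (M : SCM R D) (K : {set asg D}) :
    (forall w w' : asg D, agree_on O w w' -> (w \in K) = (w' \in K)) ->
  mass_from_obs (Pobs M O) K = \sum_(w : asg D) (w \in K)%:R * Pv M w.
Proof.
move=> K_O; rewrite /mass_from_obs /Pobs /marg.
under eq_bigr do rewrite mulr_suml mulr_sumr.
rewrite exchange_big; apply: eq_bigr => w' _.
transitivity (\sum_(w : asg D)
    (agree_on O w' w)%:R * ((w' \in K)%:R * Pv M w' / class_card w')).
  apply: eq_bigr => w _; case: (boolP (agree_on O w' w)) => [w'w|_];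
    last by rewrite !mul0r mulr0.
  by rewrite (K_O w' w w'w) (class_card_agree w'w) !mul1r mulrA.
rewrite -mulr_suml.
have -> : \sum_(w : asg D) (agree_on O w' w)%:R = class_card w' :> R.
  by apply: eq_bigr => w _; rewrite agree_on_sym.
by rewrite mulrC divfK ?class_card_neq0.
Qed.

(* The paper's policy P(x | pa), uniform where P(pa) = 0. *)
Definition imitating_policy (pa : {set 'I_n}) (X : 'I_n) (g : asg D -> R) :
    policy R D X := fun v x =>
  let K := [set w : asg D | agree_on pa w v] in
  if mass_from_obs g K != 0
  then mass_from_obs g [set w in K | w X == x] / mass_from_obs g K
  else #|D X|%:R^-1.

Lemma imitating_policy_in_space (pa PaPi : {set 'I_n}) (X : 'I_n) (g : asg D -> R) :
  pa \subset PaPi -> (forall w, 0 <= g w) ->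
  in_policy_space PaPi (imitating_policy pa g : policy R D X).
Proof.
move=> /subsetP paPi g_ge0; have mass_ge0 K : 0 <= mass_from_obs g K.
  apply: sumr_ge0 => w _; rewrite mulr_ge0 ?divr_ge0 ?g_ge0 //.
  by apply: sumr_ge0 => *; apply: ler0n.
split.
- move=> v v' vv'; rewrite /imitating_policy.
  suff -> : [set w : asg D | agree_on pa w v] = [set w : asg D | agree_on pa w v'] by [].
  by apply/setP => w; rewrite !inE; apply: eq_forallb_in => i /paPi /vv' ->.
- move=> v x; rewrite /imitating_policy; case: ifP => _.
    by rewrite divr_ge0.
  by rewrite invr_ge0 ler0n.
move=> v; rewrite /imitating_policy /=; set K := [set w : asg D | _].
have [mass0|mass_neq0] := eqVneq (mass_from_obs g K) 0.
  rewrite mass0 /= sumr_const -[_ *+ _]mulr_natr mulVf // pnatr_eq0 -lt0n.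
  by apply/card_gt0P; exists (v X).
rewrite /= -mulr_suml -[RHS](divff mass_neq0); congr (_ / _).
rewrite /mass_from_obs exchange_big /=; apply: eq_bigr => w _.
under eq_bigr do rewrite inE -mulnb natrM -mulrA.
by rewrite -mulr_sumr (sum_eq_natr (w X) (fun=> _)).
Qed.

Lemma imitating_policy_Pobs (M : SCM R D) (pa : {set 'I_n}) (X : 'I_n)
    (v : asg D) (x : D X) :
  pa \subset O -> X \in O -> marg M pa v != 0 ->
  (imitating_policy pa (Pobs M O) : policy R D X) v x = margx M pa x v / marg M pa v.
Proof.
move=> /subsetP paO XO marg_neq0.
have agree_pa w w' : agree_on O w w' -> agree_on pa w v = agree_on pa w' v.
  by move=> /forall_inP ww'; apply: eq_forallb_in => i /paO /ww' /eqP ->.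
have agree_X w w' : agree_on O w w' -> (w X == x) = (w' X == x).
  by move=> /forall_inP /(_ X XO) /eqP ->.
have margE : marg M pa v = mass_from_obs (Pobs M O) [set w : asg D | agree_on pa w v].
  rewrite mass_from_Pobs => [|w w' ww']; last by rewrite !inE (agree_pa w w').
  by apply: eq_bigr => w _; rewrite inE.
have margxE : margx M pa x v
    = mass_from_obs (Pobs M O) [set w in [set w : asg D | agree_on pa w v] | w X == x].
  rewrite mass_from_Pobs => [|w w' ww']; last first.
    by rewrite !inE (agree_pa w w') // (agree_X w w').
  by apply: eq_bigr => w _; rewrite !inE.
by rewrite /imitating_policy -margE marg_neq0 margxE.
Qed.

End Identification.

Lemma no_bidir_uV_disjoint (R : realType) (n : nat) (D : 'I_n -> finType)
    (M : SCM R D) (dir bidir : rel 'I_n) (X : 'I_n) :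
  has_diagram M dir bidir -> (forall j, ~~ bidir X j) ->
  forall j, j != X -> [disjoint uV M j & uV M X].
Proof.
move=> [_ bidirE] noX j jX; rewrite -setI_eq0 setIC; apply: contraNT (noX j).
by move=> shared; apply/bidirE; rewrite eq_sym.
Qed.

Lemma PYdo_eq_PY (R : realType) (n : nat) (D : 'I_n -> finType) (M : SCM R D)
    (dir bidir : rel 'I_n) (X Y : 'I_n) (pol : policy R D X) :
  acyclic dir -> has_diagram M dir bidir -> (forall j, ~~ bidir X j) ->
  (forall v : asg D, marg M (paG dir X) v != 0 ->
     pol v (v X) = margx M (paG dir X) (v X) v / marg M (paG dir X) v) ->
  forall y : D Y, PYdo M pol y = PY M y.
Proof.
move=> acyc diagM no_bidir pol_cond y; apply: eq_bigr => v _; congr (_ * _).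
apply: (Pdo_eq_Pv acyc diagM.1 (no_bidir_uV_disjoint diagM no_bidir)).
exact: pol_cond.
Qed.

Unset Implicit Arguments.
Theorem theorem1 (R : realType) (n : nat) (D : 'I_n -> finType)
    (dir bidir : rel 'I_n) (O : {set 'I_n}) (X Y : 'I_n) (PaPi : {set 'I_n}) :
  acyclic dir ->
  X \in O ->
  Y \notin O ->
  Y \in De dir X ->
  PaPi \subset O :\: De (cut_into dir X) X ->
  paG dir X \subset PaPi ->
  (forall j, ~~ bidir X j /\ ~~ bidir j X) ->
  imitable R D dir bidir O X PaPi Y /\
  (forall (M : SCM R D), has_diagram M dir bidir ->
     forall pol : policy R D X, in_policy_space PaPi pol ->
     (forall (v : asg D) (x : D X), marg M (paG dir X) v != 0 ->
        pol v x = margx M (paG dir X) x v / marg M (paG dir X) v) ->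
     forall y : D Y, PYdo M pol y = PY M y).
Proof.
move=> acyc XO _ _ PaPi_O pa_PaPi no_bidir.
have no_bidir_X j : ~~ bidir X j := (no_bidir j).1.
have pa_O : paG dir X \subset O.
  exact: subset_trans pa_PaPi (subset_trans PaPi_O (subsetDl _ _)).
split=> [|M diagM pol _ pol_cond]; last first.
  by apply: PYdo_eq_PY acyc diagM no_bidir_X _ => v; apply: pol_cond.
exists (imitating_policy O (paG dir X) (X := X)) => M diagM; split.
  exact: imitating_policy_in_space pa_PaPi (marg_ge0 M O).
by apply: PYdo_eq_PY acyc diagM no_bidir_X _ => v; apply: imitating_policy_Pobs.
Qed.
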